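(* The conditional logics $\mathsf{CEC}$ and $\mathsf{CECN}$ do not have Craig interpolation; consequently they have neither UIP nor ULIP.
   Context: Formulas of $\mathcal{L}_\triangleright$: atoms, $\bot$, $\wedge,\vee,\to$, binary $\triangleright$; $\top:=\bot\to\bot$; $V(\phi)$ is the set of atoms occurring in $\phi$. $\mathsf{CE}$ is the smallest set of formulas containing all instances of classical tautologies and closed under modus ponens and the rule: from $\phi_0\leftrightarrow\phi_1$ and $\psi_0\leftrightarrow\psi_1$ infer $(\phi_0\triangleright\psi_0)\to(\phi_1\triangleright\psi_1)$. $\mathsf{CEC}=\mathsf{CE}$ plus all instances of (CC) $(\phi\triangleright\psi)\wedge(\phi\triangleright\theta)\to(\phi\triangleright\psi\wedge\theta)$; $\mathsf{CECN}=\mathsf{CEC}$ plus (CN) $\phi\triangleright\top$. CIP for a logic $L$: whenever $L\vdash\phi\to\psi$ there is $\theta$ with $V(\theta)\subseteq V(\phi)\cap V(\psi)$, $L\vdash\phi\to\theta$ and $L\vdash\theta\to\psi$. (UIP and ULIP are the uniform and uniform Lyndon interpolation properties, both of which imply CIP.) *)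

From Stdlib Require Import List.

Inductive form : Type :=
| Atom : nat -> form
| Bot : form
| And : form -> form -> form
| Or : form -> form -> form
| Imp : form -> form -> form
| Cond : form -> form -> form.

Definition Top : form := Imp Bot Bot.
Definition Iff (a b : form) : form := And (Imp a b) (Imp b a).

Fixpoint occurs (p : nat) (f : form) : Prop :=
  match f with
  | Atom q => p = q
  | Bot => False
  | And a b | Or a b | Imp a b | Cond a b => occurs p a \/ occurs p b
  end.

(* Propositional formulas (schemata) used to define classical tautologies *)
Inductive pform : Type :=
| PVar : nat -> pform
| PBot : pform
| PAnd : pform -> pform -> pform
| POr : pform -> pform -> pform
| PImp : pform -> pform -> pform.

Fixpoint peval (v : nat -> bool) (t : pform) : bool :=
  match t with
  | PVar n => v n
  | PBot => false
  | PAnd a b => andb (peval v a) (peval v b)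
  | POr a b => orb (peval v a) (peval v b)
  | PImp a b => orb (negb (peval v a)) (peval v b)
  end.

Definition tautology (t : pform) : Prop := forall v, peval v t = true.

Fixpoint psubst (s : nat -> form) (t : pform) : form :=
  match t with
  | PVar n => s n
  | PBot => Bot
  | PAnd a b => And (psubst s a) (psubst s b)
  | POr a b => Or (psubst s a) (psubst s b)
  | PImp a b => Imp (psubst s a) (psubst s b)
  end.

Inductive derivable (Ax : form -> Prop) : form -> Prop :=
| d_taut : forall (t : pform) (s : nat -> form),
    tautology t -> derivable Ax (psubst s t)
| d_ax : forall f, Ax f -> derivable Ax f
| d_mp : forall f g, derivable Ax (Imp f g) -> derivable Ax f -> derivable Ax g
| d_rce : forall f0 f1 g0 g1,
    derivable Ax (Iff f0 f1) -> derivable Ax (Iff g0 g1) ->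
    derivable Ax (Imp (Cond f0 g0) (Cond f1 g1)).

Definition CC_ax (f : form) : Prop :=
  exists a b c, f = Imp (And (Cond a b) (Cond a c)) (Cond a (And b c)).

Definition CN_ax (f : form) : Prop := exists a, f = Cond a Top.

Definition CE (f : form) : Prop := derivable (fun _ => False) f.
Definition CEC (f : form) : Prop := derivable CC_ax f.
Definition CECN (f : form) : Prop := derivable (fun g => CC_ax g \/ CN_ax g) f.

Definition CIP (L : form -> Prop) : Prop :=
  forall phi psi, L (Imp phi psi) ->
    exists theta,
      (forall p, occurs p theta -> occurs p phi /\ occurs p psi) /\
      L (Imp phi theta) /\ L (Imp theta psi).

From Stdlib Require Import Bool.

(* Idea (a bisimulation argument in neighbourhood semantics).  Interpret the
   language in models with a valuation and one global neighbourhood family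
   N : (W -> bool) -> bool, where phi |> psi holds iff the truth set of psi
   belongs to N.  Such a model validates CE whenever N is extensional, (CC)
   when N is closed under intersections and (CN) when N contains W.

   Take phi := Bot |> (~q /\ r) and psi := (Bot |> (q /\ s)) -> (Bot |> Bot).
   By (CC) and (RCE), CEC |- phi -> psi, since (~q /\ r) /\ (q /\ s) <-> Bot.
   An interpolant could only mention q.  On four worlds A1 A2 B1 B2, with
   q true exactly on the B's, r only at A1 and s only at B1, let the first
   model have neighbourhoods {A1} and the second {B1} (plus W, for CECN).
   Both validate the logic; phi holds at A1 in the first, psi fails at A1 in
   the second.  The relation "same q-value" is a bisimulation between the two
   models for formulas in q alone, so an interpolant would have the same
   value at A1 in both models, which is impossible. *)

Section Semantics.

Variables (W : Type) (val : nat -> W -> bool) (N : (W -> bool) -> bool).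

Fixpoint ev (f : form) (w : W) : bool :=
  match f with
  | Atom n => val n w
  | Bot => false
  | And a b => ev a w && ev b w
  | Or a b => ev a w || ev b w
  | Imp a b => negb (ev a w) || ev b w
  | Cond _ b => N (ev b)
  end.

Definition valid (f : form) : Prop := forall w, ev f w = true.

Definition extensional : Prop :=
  forall f g, (forall w, f w = g w) -> N f = N g.

Lemma ev_psubst (s : nat -> form) (t : pform) (w : W) :
  ev (psubst s t) w = peval (fun n => ev (s n) w) t.
Proof. induction t; simpl; try rewrite IHt1, IHt2; reflexivity. Qed.

Lemma valid_iff (a b : form) : valid (Iff a b) -> forall w, ev a w = ev b w.
Proof.
  intros H w. specialize (H w). simpl in H.
  destruct (ev a w), (ev b w); simpl in *; congruence.
Qed.

Lemma soundness (Ax : form -> Prop) :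
  extensional -> (forall g, Ax g -> valid g) ->
  forall f, derivable Ax f -> valid f.
Proof.
  intros Hext HAx f D. induction D as [t s Ht|f Hf|f g _ IHfg _ IHf|f0 f1 g0 g1 _ _ _ IHg].
  - intro w. rewrite ev_psubst. apply Ht.
  - apply HAx, Hf.
  - intro w. specialize (IHfg w). simpl in IHfg.
    rewrite (IHf w) in IHfg. exact IHfg.
  - intro w. simpl. rewrite (Hext (ev g0) (ev g1) (valid_iff _ _ IHg)).
    destruct (N (ev g1)); reflexivity.
Qed.

Lemma valid_CC :
  (forall f g, N f = true -> N g = true -> N (fun w => f w && g w) = true) ->
  forall g, CC_ax g -> valid g.
Proof.
  intros Hcap g (a & b & c & ->) w. simpl.
  destruct (N (ev b)) eqn:Eb, (N (ev c)) eqn:Ec; simpl; auto.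
Qed.

Lemma valid_CN : N (fun _ => true) = true -> forall g, CN_ax g -> valid g.
Proof. intros Htop g (a & ->) w. exact Htop. Qed.

End Semantics.

Arguments ev {W}.
Arguments valid {W}.
Arguments extensional {W}.

Section Bisimulation.

Variables (W1 W2 : Type) (val1 : nat -> W1 -> bool) (val2 : nat -> W2 -> bool).
Variables (N1 : (W1 -> bool) -> bool) (N2 : (W2 -> bool) -> bool).
Variables (Z : W1 -> W2 -> Prop) (P : nat -> Prop).

Hypothesis Z_atoms : forall p w1 w2, P p -> Z w1 w2 -> val1 p w1 = val2 p w2.
Hypothesis Z_nbh : forall f g,
  (forall w1 w2, Z w1 w2 -> f w1 = g w2) -> N1 f = N2 g.

Lemma ev_bisim (th : form) : (forall p, occurs p th -> P p) ->
  forall w1 w2, Z w1 w2 -> ev val1 N1 th w1 = ev val2 N2 th w2.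
Proof.
  induction th as [n| |a IHa b IHb|a IHa b IHb|a IHa b IHb|a _ b IHb];
    intros Hocc w1 w2 Hz; simpl in *; try reflexivity.
  - apply Z_atoms; auto.
  - rewrite (IHa (fun p h => Hocc p (or_introl h)) w1 w2 Hz),
            (IHb (fun p h => Hocc p (or_intror h)) w1 w2 Hz); reflexivity.
  - rewrite (IHa (fun p h => Hocc p (or_introl h)) w1 w2 Hz),
            (IHb (fun p h => Hocc p (or_intror h)) w1 w2 Hz); reflexivity.
  - rewrite (IHa (fun p h => Hocc p (or_introl h)) w1 w2 Hz),
            (IHb (fun p h => Hocc p (or_intror h)) w1 w2 Hz); reflexivity.
  - apply Z_nbh. apply IHb. intros p h. apply Hocc. right. exact h.
Qed.

Lemma no_CIP_by_bisimulation (Ax : form -> Prop) (phi psi : form) (w1 : W1) (w2 : W2) :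
  (forall p, occurs p phi /\ occurs p psi -> P p) ->
  (forall f, derivable Ax f -> valid val1 N1 f) ->
  (forall f, derivable Ax f -> valid val2 N2 f) ->
  derivable Ax (Imp phi psi) -> Z w1 w2 ->
  ev val1 N1 phi w1 = true -> ev val2 N2 psi w2 = false ->
  ~ CIP (derivable Ax).
Proof.
  intros HP Sound1 Sound2 Dphipsi Hz Hphi Hpsi Hcip.
  destruct (Hcip phi psi Dphipsi) as (th & Hocc & Dphith & Dthpsi).
  assert (Hth1 : ev val1 N1 th w1 = true).
  { specialize (Sound1 _ Dphith w1). simpl in Sound1.
    rewrite Hphi in Sound1. exact Sound1. }
  assert (Hth2 : ev val2 N2 th w2 = true).
  { rewrite <- (ev_bisim th (fun p h => HP p (Hocc p h)) w1 w2 Hz). exact Hth1. }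
  specialize (Sound2 _ Dthpsi w2). simpl in Sound2.
  rewrite Hth2, Hpsi in Sound2. discriminate.
Qed.

End Bisimulation.

(* The separating formulas: q = Atom 0, r = Atom 1, s = Atom 2. *)
Definition q : form := Atom 0.
Definition X : form := And (Imp q Bot) (Atom 1).
Definition Y : form := And q (Atom 2).
Definition phi : form := Cond Bot X.
Definition psi : form := Imp (Cond Bot Y) (Cond Bot Bot).

Definition piff (a b : pform) : pform := PAnd (PImp a b) (PImp b a).

Lemma derivable_chain (Ax : form -> Prop) (a b c d : form) :
  derivable Ax (Imp (And a b) c) -> derivable Ax (Imp c d) ->
  derivable Ax (Imp a (Imp b d)).
Proof.
  intros Dabc Dcd.
  pose (s := fun n => match n with 0 => a | 1 => b | 2 => c | _ => d end).
  assert (T : tautology (PImp (PImp (PAnd (PVar 0) (PVar 1)) (PVar 2))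
     (PImp (PImp (PVar 2) (PVar 3)) (PImp (PVar 0) (PImp (PVar 1) (PVar 3)))))).
  { intro v; simpl; destruct (v 0), (v 1), (v 2), (v 3); reflexivity. }
  exact (d_mp _ _ _ (d_mp _ _ _ (d_taut Ax _ s T) Dabc) Dcd).
Qed.

(* Every logic containing (CC) proves phi -> psi: from Bot |> X and Bot |> Y,
   (CC) gives Bot |> (X /\ Y), and X /\ Y <-> Bot allows (RCE). *)
Lemma derivable_phi_psi (Ax : form -> Prop) :
  (forall g, CC_ax g -> Ax g) -> derivable Ax (Imp phi psi).
Proof.
  intros HCC. apply derivable_chain with (c := Cond Bot (And X Y)).
  - apply d_ax, HCC. exists Bot, X, Y. reflexivity.
  - apply d_rce.
    + apply (d_taut Ax (piff PBot PBot) Atom). intro v; reflexivity.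
    + (* X /\ Y <-> Bot is an instance of a tautology in q, r, s. *)
      apply (d_taut Ax (piff (PAnd (PAnd (PImp (PVar 0) PBot) (PVar 1))
                                   (PAnd (PVar 0) (PVar 2))) PBot) Atom).
      intro v; simpl; destruct (v 0), (v 1), (v 2); reflexivity.
Qed.

Inductive world : Type := A1 | A2 | B1 | B2.

Definition isB (w : world) : bool := match w with B1 | B2 => true | _ => false end.

Definition val (n : nat) (w : world) : bool :=
  match n, w with
  | 0, _ => isB w
  | 1, A1 | 2, B1 => true
  | _, _ => false
  end.

(* Neighbourhood families on the frame, described by the four membership bits
   of a set; [top] decides whether the whole frame is a neighbourhood. *)
Definition nbh_of (F : bool -> bool -> bool -> bool -> bool) (f : world -> bool) : bool :=
  F (f A1) (f A2) (f B1) (f B2).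

Definition NA (top : bool) : (world -> bool) -> bool :=
  nbh_of (fun a1 a2 b1 b2 => a1 && negb a2 && negb b1 && negb b2
                             || top && a1 && a2 && b1 && b2).
Definition NB (top : bool) : (world -> bool) -> bool :=
  nbh_of (fun a1 a2 b1 b2 => negb a1 && negb a2 && b1 && negb b2
                             || top && a1 && a2 && b1 && b2).

Lemma nbh_of_extensional (F : bool -> bool -> bool -> bool -> bool) :
  extensional (nbh_of F).
Proof. intros f g E. unfold nbh_of. rewrite !E. reflexivity. Qed.

Lemma sound_nbh_of (top : bool) (Ax : form -> Prop)
    (F : bool -> bool -> bool -> bool -> bool) :
  (forall g, Ax g -> CC_ax g \/ (top = true /\ CN_ax g)) ->
  (forall a1 a2 b1 b2 c1 c2 d1 d2, F a1 a2 b1 b2 = true -> F c1 c2 d1 d2 = true ->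
     F (a1 && c1) (a2 && c2) (b1 && d1) (b2 && d2) = true) ->
  (top = true -> F true true true true = true) ->
  forall f, derivable Ax f -> valid val (nbh_of F) f.
Proof.
  intros HAx Hcap Htop. apply soundness; [apply nbh_of_extensional|].
  intros g Hg. destruct (HAx g Hg) as [Hcc|[Ht Hcn]].
  - apply valid_CC; [|exact Hcc]. intros h k; apply Hcap.
  - apply valid_CN; [exact (Htop Ht) | exact Hcn].
Qed.

Lemma sound_models (top : bool) (Ax : form -> Prop) :
  (forall g, Ax g -> CC_ax g \/ (top = true /\ CN_ax g)) ->
  forall f, derivable Ax f -> valid val (NA top) f /\ valid val (NB top) f.
Proof.
  intros HAx f D.
  split; apply (sound_nbh_of top Ax); try assumption;
    try (intros ->; reflexivity);
    intros [] [] [] [] [] [] [] []; destruct top; simpl; auto.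
Qed.

(* Having the same q-value is a bisimulation between the two models for
   formulas in q only. *)
Lemma same_q_nbh (top : bool) (f g : world -> bool) :
  (forall w1 w2, isB w1 = isB w2 -> f w1 = g w2) -> NA top f = NB top g.
Proof.
  intros Hfg. unfold NA, NB, nbh_of.
  assert (HA2 : g A2 = g A1) by (rewrite <- (Hfg A1 A2), (Hfg A1 A1); reflexivity).
  assert (HB2 : g B2 = g B1) by (rewrite <- (Hfg B1 B2), (Hfg B1 B1); reflexivity).
  rewrite (Hfg A1 A1), (Hfg A2 A1), (Hfg B1 B1), (Hfg B2 B1), HA2, HB2 by reflexivity.
  destruct (g A1), (g B1), top; reflexivity.
Qed.

Lemma no_CIP_above_CEC (top : bool) (Ax : form -> Prop) :
  (forall g, CC_ax g -> Ax g) ->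
  (forall g, Ax g -> CC_ax g \/ (top = true /\ CN_ax g)) ->
  ~ CIP (derivable Ax).
Proof.
  intros HCC HAx.
  apply (no_CIP_by_bisimulation _ _ val val (NA top) (NB top)
           (fun w1 w2 => isB w1 = isB w2) (fun p => p = 0))
    with (phi := phi) (psi := psi) (w1 := A1) (w2 := A1).
  - intros p w1 w2 -> Hz. exact Hz.
  - apply same_q_nbh.
  - intros p [Hp1 Hp2]. simpl in Hp1, Hp2. intuition congruence.
  - intros f D. apply (sound_models top Ax HAx f D).
  - intros f D. apply (sound_models top Ax HAx f D).
  - apply derivable_phi_psi, HCC.
  - reflexivity.
  - reflexivity.
  - destruct top; reflexivity.
Qed.

Theorem mainTheorem12 : ~ CIP CEC /\ ~ CIP CECN.
Proof.
  split.
  - apply (no_CIP_above_CEC false); auto.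
  - apply (no_CIP_above_CEC true); auto.
    intros g [Hcc|Hcn]; auto.
Qed.
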